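(* Let $p$ be an odd prime such that $3\mid p-1$ and $p\nmid 2^{(p-1)/3}-1$. Then there do not exist integers $r$ with $0<r<p-1$ and positive integers $e$ with $\gcd(e,3)=1$ and $\gcd\big(r,\tfrac{p-1}{3}\big)=1$ such that $x^r\big(x^{e(p-1)/3}+1\big)$ is a permutation polynomial of $\mathbb{F}_p$.
   Context: A permutation polynomial of $\mathbb{F}_p$ is a polynomial inducing a bijection $\mathbb{F}_p\to\mathbb{F}_p$. *)

From HB Require Import structures.
From mathcomp Require Import all_boot all_order all_algebra.
Set Implicit Arguments. Unset Strict Implicit. Unset Printing Implicit Defensive.
Import GRing.Theory.
Local Open Scope ring_scope.

Definition is_perm_poly (F : finFieldType) (f : {poly F}) : Prop :=
  bijective (fun x : F => f.[x]).

From HB Require Import structures.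
From mathcomp Require Import all_boot all_order all_algebra all_field zify ring.
Set Implicit Arguments. Unset Strict Implicit. Unset Printing Implicit Defensive.
Import GRing.Theory.
Local Open Scope ring_scope.

(* Write p - 1 = 3d, with d even as p is odd, and f = X^r (X^(ed) + 1).  For
   x <> 0 the value y = x^d is a cube root of unity and f(x)^d = y^r (y^e + 1)^d.
   As w = 2^d is a primitive cube root of unity, this is w when y = 1, and
   y^(r + 2ed) otherwise, because y^e + 1 = -y^(2e).  Whatever r + 2ed is mod 3,
   two of the three values of y are sent to the same value of f(x)^d, so the
   2d nonzero x carrying them land in a set of at most d elements and f is not
   injective. *)

Lemma cube_root_primitive (F : fieldType) (w : F) :
  w ^+ 3 = 1 -> w != 1 -> 3.-primitive_root w.
Proof.
move=> w3 w1; have [m prim_w m3] := prim_order_exists (isT : (0 < 3)%N) w3.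
have [m1 | m_neq1] := eqVneq m 1.
  by move: w1; rewrite -(prim_expr_order prim_w) m1 expr1 eqxx.
by move/(prime_nt_dvdP _ m_neq1): m3 => <-.
Qed.

Lemma prim_root3_add1 (F : fieldType) (u : F) :
  3.-primitive_root u -> u + 1 = - u ^+ 2.
Proof.
move=> prim_u; apply/eqP; rewrite -subr_eq0 opprK.
have u1 : u - 1 != 0 by rewrite subr_eq0 -[u]expr1 -(prim_order_dvd prim_u).
have : (u - 1) * (u + 1 + u ^+ 2) = u ^+ 3 - 1 by ring.
by rewrite (prim_expr_order prim_u) subrr => /eqP; rewrite mulf_eq0 (negbTE u1).
Qed.

Lemma cube_root_eval (F : fieldType) (y : F) (r e d : nat) :
  y ^+ 3 = 1 -> coprime e 3 -> ~~ odd d ->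
  y ^+ r * (y ^+ e + 1) ^+ d = if y == 1 then 2 ^+ d else y ^+ (r + e * (2 * d)).
Proof.
move=> y3 e3 d_even; have [-> | y1] := eqVneq y 1; first by rewrite !expr1n mul1r.
have prim_ye : 3.-primitive_root (y ^+ e).
  by rewrite prim_root_exp_coprime // cube_root_primitive.
rewrite prim_root3_add1 // exprNn -signr_odd (negbTE d_even) mul1r.
by rewrite -!exprM mulnA -exprD.
Qed.

Lemma cube_root_collision (F : fieldType) (w : F) (k : nat) :
  3.-primitive_root w ->
  exists a c : F, forall y, y ^+ 3 = 1 -> y != a -> (if y == 1 then w else y ^+ k) = c.
Proof.
move=> prim_w.
have w1 : (w == 1) = false by rewrite -[w]expr1 -(prim_order_dvd prim_w).
have w21 : (w ^+ 2 == 1) = false by rewrite -(prim_order_dvd prim_w).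
have w4 : w ^+ 2 ^+ 2 = w by rewrite -exprM -(prim_expr_mod prim_w) expr1.
have : (k %% 3 < 3)%N by rewrite ltn_mod.
(* The value c is taken at both cube roots other than a: at w, w^2 when
   k = 0 (mod 3); at 1, w when k = 1; at 1, w^2 when k = 2. *)
case kE : (k %% 3)%N => [|[|[|//]]] _; [exists 1, 1 | exists (w ^+ 2), w | exists w, w];
  move=> y y3; rewrite -(expr_mod k y3) kE;
  have [[[|[|[|//]]] i3] ->] := prim_rootP prim_w y3;
  by rewrite /= ?expr0 ?expr1 ?eqxx ?w1 ?w21 ?w4.
Qed.

Lemma card_rootsXn_le (F : finFieldType) (d : nat) (c : F) :
  (0 < d)%N -> (#|[set x : F | x ^+ d == c]| <= d)%N.
Proof.
move=> d_gt0; pose P : {poly F} := 'X^d - c%:P.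
have sizeP : size P = d.+1 by rewrite size_XnsubC.
have P_neq0 : P != 0 by rewrite -size_poly_eq0 sizeP.
rewrite -ltnS -sizeP cardE; apply: (max_poly_roots P_neq0); last exact: enum_uniq.
by apply/allP=> x; rewrite mem_enum inE /root !hornerE subr_eq0.
Qed.

Lemma no_injection_into_power_fiber (F : finFieldType) (n d : nat) (f : F -> F) (a c : F) :
  (0 < d)%N -> (2 < n)%N -> #|F| = (n * d).+1 -> injective f ->
  ~ (forall x, x != 0 -> x ^+ d != a -> f x ^+ d = c).
Proof.
move=> d_gt0 n_gt2 cardF f_inj f_collapse.
pose S := [set x : F | (x != 0) && (x ^+ d != a)].
have S_le : (#|S| <= d)%N.
  rewrite -(card_in_imset (in2W f_inj)).
  apply: leq_trans (card_rootsXn_le c d_gt0).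
  apply/subset_leq_card/subsetP=> _ /imsetP[x + ->].
  by rewrite !inE => /andP[x0 xa]; rewrite f_collapse.
pose A := [set x : F | x ^+ d == a].
have A_le : (#|A| <= d)%N := card_rootsXn_le a d_gt0.
have nonzero_sub : [set~ 0] \subset S :|: A.
  by apply/subsetP=> x; rewrite !inE => ->; case: (x ^+ d == a).
have := leq_trans (subset_leq_card nonzero_sub) (leq_card_setU _ _).
move/leq_trans/(_ (leq_add S_le A_le)).
rewrite cardsC1 cardF /=; nia.
Qed.

Lemma expf_card_pred (F : finFieldType) (x : F) : x != 0 -> x ^+ #|F|.-1 = 1.
Proof.
move=> x_neq0; apply: (mulfI x_neq0).
by rewrite mulr1 -exprS prednK ?expf_card // (cardD1 x).
Qed.

Theorem proposition4p1 (p : nat) :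
  prime p -> odd p -> (3 %| p.-1)%N -> ~~ (p %| 2 ^ (p.-1 %/ 3) - 1)%N ->
  ~ (exists (r e : nat),
       [/\ (0 < r < p.-1)%N, (0 < e)%N, coprime e 3, coprime r (p.-1 %/ 3)
         & is_perm_poly ('X^r * ('X^(e * (p.-1 %/ 3)) + 1) : {poly 'F_p})]).
Proof.
move=> p_pr p_odd dvd3_pm1 two_pow_ndvd [r [e [_ _ e_coprime3 _ f_perm]]].
set d := (p.-1 %/ 3)%N in two_pow_ndvd f_perm.
have pm1 : p.-1 = (3 * d)%N by rewrite mulnC divnK.
have p_gt0 := prime_gt0 p_pr.
have d_gt0 : (0 < d)%N by have := prime_gt1 p_pr; lia.
have d_even : ~~ odd d.
  by move: p_odd; rewrite -(prednK p_gt0) pm1 /= oddM; case: (odd d).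
have cardF : #|'F_p| = (3 * d).+1 by rewrite card_Fp // -pm1 prednK.
have cube1 (x : 'F_p) : x != 0 -> (x ^+ d) ^+ 3 = 1.
  by move=> x_neq0; rewrite -exprM mulnC -[(3 * d)%N]/((3 * d).+1.-1) -cardF expf_card_pred.
have two_neq0 : (2 : 'F_p) != 0.
  rewrite -(dvdn_pcharf (pchar_Fp p_pr)) dvdn_prime2 //.
  by apply: contraTneq p_odd => ->.
have w_prim : 3.-primitive_root (2 ^+ d : 'F_p).
  apply: cube_root_primitive; first exact: cube1.
  apply: contra two_pow_ndvd => /eqP two_pow1.
  by rewrite (dvdn_pcharf (pchar_Fp p_pr)) natrB ?expn_gt0 // natrX two_pow1 subrr.
have [a [c collapse]] := cube_root_collision (r + e * (2 * d)) w_prim.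
apply: (no_injection_into_power_fiber (a := a) (c := c) d_gt0 _ cardF (bij_inj f_perm))
  => // x x_neq0 xd_neq_a.
rewrite !hornerE exprMn -!exprM mulnC [(e * d)%N]mulnC !exprM.
by rewrite cube_root_eval ?cube1 // collapse ?cube1.
Qed.
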